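(* Let $Z\subset Y\subset X$ be Banach spaces, with $Z,Y$ closed subspaces of $X$. Suppose $Y$ has finite codimension in $X$ and $(X,Y)$ has the CQLP. Then $(X/Z,Y/Z)$ has the CQLP.
   Context: For a closed subspace $J$ of a Banach space $X$ with quotient map $\pi:X\to X/J$, the pair $(X,J)$ has the compact quotient lifting property (CQLP) if for every Banach space $W$ and every compact linear operator $T:W\to X/J$ there is a compact linear operator $S:W\to X$ with $\pi\circ S=T$ and $\|S\|=\|T\|$. *)

From HB Require Import structures.
From mathcomp Require Import all_boot all_order all_algebra.
From mathcomp Require Import all_classical all_reals all_analysis.
Set Implicit Arguments. Unset Strict Implicit. Unset Printing Implicit Defensive.
Import Order.TTheory GRing.Theory Num.Theory.
Import numFieldNormedType.Exports.
Local Open Scope classical_set_scope.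
Local Open Scope ring_scope.

Definition lin_subspace (R : realType) (X : normedModType R) (J : set X) : Prop :=
  J 0 /\ forall (a : R) (x y : X), J x -> J y -> J (a *: x + y).

Definition opnorm (R : realType) (W V : normedModType R) (T : W -> V) : R :=
  sup [set `|T w| | w in [set w : W | `|w| <= 1]].

Definition compact_op (R : realType) (W V : normedModType R) (T : {linear W -> V}) : Prop :=
  compact (closure (T @` [set w : W | `|w| <= 1])).

(* pi : X -> Q realizes the quotient map X -> X/J (Q is X/J up to the
   canonical isometric isomorphism): pi is linear, onto, with kernel J,
   and Q carries the quotient norm |pi x| = inf_{j in J} |x - j|. *)
Definition is_quotient_map (R : realType) (X Q : normedModType R) (J : set X)
    (pi : {linear X -> Q}) : Prop :=
  [/\ (forall q : Q, exists x : X, pi x = q),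
      (forall x : X, pi x = 0 <-> J x) &
      (forall x : X, `|pi x| = inf [set `|x - j| | j in J])].

Definition CQLP (R : realType) (X : completeNormedModType R) (J : set X) : Prop :=
  forall (Q : completeNormedModType R) (pi : {linear X -> Q}),
    is_quotient_map J pi ->
    forall (W : completeNormedModType R) (T : {linear W -> Q}),
      compact_op T ->
      exists S : {linear W -> X},
        [/\ compact_op S, (forall w : W, pi (S w) = T w) & opnorm S = opnorm T].

Definition finite_codim (R : realType) (X : normedModType R) (J : set X) : Prop :=
  exists (n : nat) (e : 'I_n -> X), forall x : X,
    exists c : 'I_n -> R, J (x - \sum_(i < n) c i *: e i).

From HB Require Import structures.
From mathcomp Require Import all_boot all_order all_algebra.
From mathcomp Require Import all_classical all_reals all_analysis.
Set Implicit Arguments. Unset Strict Implicit. Unset Printing Implicit Defensive.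
Import Order.TTheory GRing.Theory Num.Theory.
Import numFieldNormedType.Exports.
Local Open Scope classical_set_scope.
Local Open Scope ring_scope.

(* Let Z <= Y <= X, let piZ : X -> X/Z and pi : X/Z -> (X/Z)/(Y/Z)
   be quotient maps.  By the third isomorphism theorem the composite
   pi \o piZ is a quotient map X -> X/Y (kernel Y, quotient norm); this is
   [quotient_map_comp].  Given a compact T : W -> (X/Z)/(Y/Z), the CQLP of
   (X, Y) applied to pi \o piZ gives a compact lift S : W -> X with
   ||S|| = ||T||.  Then piZ \o S lifts T through pi; it is compact because
   piZ is a contraction, hence continuous ([compact_op_comp]), and its norm
   is squeezed between ||T|| and ||S|| because pi and piZ are contractions
   ([opnorm_sandwich]). *)

Lemma inf_nonneg_le (R : realType) (E : set R) (x : R) :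
  (forall y, E y -> 0 <= y) -> E x -> inf E <= x.
Proof. by move=> E_ge0 Ex; apply: ge_inf => //; exists 0. Qed.

Section QuotientNorm.
Variables (R : realType) (X Q : normedModType R) (J : set X).
Variable pi : {linear X -> Q}.
Hypothesis pi_quot : is_quotient_map J pi.

Lemma quotient_norm_le_dist (x j : X) : J j -> `|pi x| <= `|x - j|.
Proof.
have [_ _ ->] := pi_quot => Jj; apply: inf_nonneg_le; last by exists j.
by move=> _ [k _ <-].
Qed.

Lemma quotient_map_contractive : J 0 -> forall x, `|pi x| <= `|x|.
Proof. by move=> J0 x; have := @quotient_norm_le_dist x 0 J0; rewrite subr0. Qed.

End QuotientNorm.

Section QuotientComposition.
Variables (R : realType) (X QZ Q : normedModType R) (Y Z : set X).
Variables (piZ : {linear X -> QZ}) (pi : {linear QZ -> Q}).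
Hypotheses (Y_sub : lin_subspace Y) (Z_sub : lin_subspace Z) (ZY : Z `<=` Y).
Hypotheses (piZ_quot : is_quotient_map Z piZ) (pi_quot : is_quotient_map (piZ @` Y) pi).

Let Y_subr_closed {x y : X} : Y x -> Y y -> Y (y - x).
Proof. by move=> Yx Yy; rewrite addrC -scaleN1r; exact: Y_sub.2. Qed.

Let Y_addr_closed {x y : X} : Y x -> Y y -> Y (x + y).
Proof. by move=> Yx Yy; rewrite -[x]scale1r; exact: Y_sub.2. Qed.

Lemma quotient_comp_kernel (x : X) : pi (piZ x) = 0 <-> Y x.
Proof.
have [_ ker_pi _] := pi_quot; have [_ ker_piZ _] := piZ_quot.
rewrite ker_pi; split; last by exists x.
move=> [y Yy /eqP]; rewrite -subr_eq0 -linearB => /eqP /ker_piZ /ZY Yyx.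
by have := Y_subr_closed Yyx Yy; rewrite opprB subrKC.
Qed.

Lemma quotient_comp_norm (x : X) :
  `|pi (piZ x)| = inf [set `|x - y| | y in Y].
Proof.
have [_ _ norm_pi] := pi_quot; have [_ _ norm_piZ] := piZ_quot.
apply/eqP; rewrite eq_le; apply/andP; split.
- apply: lb_le_inf; first by exists `|x - 0|, 0 => //; exact: Y_sub.1.
  move=> _ [y Yy <-].
  apply: le_trans _ (quotient_map_contractive piZ_quot Z_sub.1 (x - y)).
  by rewrite linearB; apply: (quotient_norm_le_dist pi_quot); exists y.
- rewrite norm_pi; apply: lb_le_inf.
  + by exists `|piZ x - piZ 0|; exists (piZ 0) => //; exists 0 => //; exact: Y_sub.1.
  move=> _ [_ [y Yy <-] <-]; rewrite -linearB norm_piZ.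
  apply: lb_le_inf; first by exists `|x - y - 0|, 0 => //; exact: Z_sub.1.
  move=> _ [z Zz <-]; apply: inf_nonneg_le; first by move=> _ [j _ <-].
  by exists (y + z); [exact: Y_addr_closed (ZY Zz) | rewrite opprD addrA].
Qed.

Lemma quotient_map_comp : is_quotient_map Y (pi \o piZ).
Proof.
have [pi_onto _ _] := pi_quot; have [piZ_onto _ _] := piZ_quot.
split; [|exact: quotient_comp_kernel|exact: quotient_comp_norm].
by move=> q; have [q' <-] := pi_onto q; have [x <-] := piZ_onto q'; exists x.
Qed.

End QuotientComposition.

Lemma contractive_linear_continuous (R : realType) (V U : normedModType R)
    (f : {linear V -> U}) :
  (forall x, `|f x| <= `|x|) -> continuous f.
Proof.
move=> f_le; apply: bounded_linear_continuous; rewrite /bounded_near; near=> M.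
apply: filterS (nbhsx_ballx (0 : V) 1 ltr01) => y.
rewrite -ball_normE /ball_ /= sub0r normrN => y_lt1.
apply: le_trans (f_le y) _; apply: le_trans (ltW y_lt1) _.
near: M; exact: nbhs_pinfty_ge.
Unshelve. all: by end_near.
Qed.

(* Composing a compact operator with a continuous linear map on the left
   yields a compact operator: the continuous image of the compact closure of
   S(ball) is a compact, hence closed, set containing f(S(ball)). *)
Lemma compact_op_comp (R : realType) (W V U : normedModType R)
    (S : {linear W -> V}) (f : {linear V -> U}) :
  continuous f -> compact_op S -> compact_op (f \o S).
Proof.
rewrite /compact_op => f_cont S_cpt; set K := closure _ in S_cpt.
have fK_cpt : compact (f @` K).
  by apply: continuous_compact => //; exact: continuous_subspaceT.
apply: (subclosed_compact _ fK_cpt); first exact: closed_closure.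
have -> : f @` K = closure (f @` K).
  by apply/closure_id; exact: compact_closed (@norm_hausdorff _ _) fK_cpt.
apply: closureS => _ [w w_le1 <-]; exists (S w) => //.
by apply: subset_closure; exists w.
Qed.

(* If |T w| <= |P w| <= |S w| pointwise, S maps the unit ball onto a
   relatively compact (hence bounded) set and ||S|| = ||T||, then also
   ||P|| = ||T||: both sups exist and are compared monotonically. *)
Lemma opnorm_sandwich (R : realType) (W V U Q : normedModType R)
    (S : W -> V) (P : W -> U) (T : W -> Q) :
  compact (closure (S @` [set w : W | `|w| <= 1])) ->
  (forall w, `|T w| <= `|P w|) -> (forall w, `|P w| <= `|S w|) ->
  opnorm S = opnorm T -> opnorm P = opnorm T.
Proof.
move=> S_cpt TP PS normST.
have [M [_ M_bnd]] := compact_bounded S_cpt.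
have S_bnd w : `|w| <= 1 -> `|S w| <= M + 1.
  move=> w_le1; apply: (M_bnd (M + 1)); first by rewrite ltrDl.
  by apply: subset_closure; exists w.
have img_neq0 (V' : normedModType R) (g : W -> V') :
    [set `|g w| | w in [set w : W | `|w| <= 1]] !=set0.
  by exists `|g 0|, 0 => //=; rewrite normr0.
have S_sup : has_sup [set `|S w| | w in [set w : W | `|w| <= 1]].
  by split; [exact: img_neq0 | exists (M + 1) => _ [w w_le1 <-]; exact: S_bnd].
have P_sup : has_sup [set `|P w| | w in [set w : W | `|w| <= 1]].
  split; first exact: img_neq0.
  by exists (M + 1) => _ [w w_le1 <-]; exact: le_trans (PS w) (S_bnd w w_le1).
apply/eqP; rewrite eq_le; apply/andP; split; last apply: sup_le => //.
- rewrite -normST; apply: sup_le => // _ [w w_le1 <-].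
  by exists `|S w|; split; [exists w | exact: PS].
- by move=> _ [w w_le1 <-]; exists `|P w|; split; [exists w | exact: TP].
Qed.

Theorem proposition5 (R : realType) (X : completeNormedModType R) (Y Z : set X)
  (QZ : completeNormedModType R) (piZ : {linear X -> QZ}) :
  lin_subspace Y -> closed Y -> lin_subspace Z -> closed Z -> Z `<=` Y ->
  finite_codim Y ->
  is_quotient_map Z piZ ->
  CQLP Y ->
  CQLP (piZ @` Y).
Proof.
move=> Y_sub _ Z_sub _ ZY _ piZ_quot Y_cqlp Q pi pi_quot W T T_cpt.
have comp_quot := quotient_map_comp Y_sub Z_sub ZY piZ_quot pi_quot.
have [S [S_cpt S_lift S_norm]] := Y_cqlp Q (pi \o piZ) comp_quot W T T_cpt.
have piZ_le := quotient_map_contractive piZ_quot Z_sub.1.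
have pi_le : forall q, `|pi q| <= `|q|.
  by apply: quotient_map_contractive pi_quot _; exists 0; [exact: Y_sub.1 | exact: linear0].
exists (piZ \o S); split=> //.
- exact: compact_op_comp (contractive_linear_continuous piZ_le) S_cpt.
- apply: opnorm_sandwich S_cpt _ _ S_norm => w /=; last exact: piZ_le.
  by rewrite -S_lift; exact: pi_le.
Qed.
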